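(* Let $\mathcal S$ be a subset of a finite multi-algebra $\mathcal A=\mathcal A_1\times\cdots\times\mathcal A_m$ that is $\Rsh$-invariant through a multi-refinement $H=(h_1,\dots,h_m)$. Then $\mathcal S$ is projection stable through $H$.
   Context: A finite non-associative algebra is a tuple $(\mathcal A,\cup,\neg,\emptyset,\mathcal B,\diamond,\overline{\cdot},e)$ where $(\mathcal A,\cup,\neg,\emptyset,\mathcal B)$ is a finite Boolean algebra and for all $x,y,z$: $\overline{\overline x}=x$, $\overline{x\cup y}=\overline x\cup\overline y$, $\overline{x\diamond y}=\overline y\diamond\overline x$, $e\diamond x=x\diamond e=x$, $x\diamond(y\cup z)=(x\diamond y)\cup(x\diamond z)$, $(x\diamond y)\cap\overline z=\emptyset\iff(y\diamond z)\cap\overline x=\emptyset$. $r\subseteq r'$ means $r\cup r'=r'$. A projection operator from $\mathcal A$ to $\mathcal A'$ is a map $\Rsh$ with $\Rsh(r\cup r')=\Rsh r\cup\Rsh r'$ and $\Rsh\overline r=\overline{\Rsh r}$. A finite multi-algebra is a product $\mathcal A_1\times\cdots\times\mathcal A_m$ of finite non-associative algebras with projection operators $\Rsh_i^j:\mathcal A_i\to\mathcal A_j$ for distinct $i,j$. A relation $R=(R_1,\dots,R_m)$ is $\Rsh$-consistent if $R_j\subseteq\Rsh_i^jR_i$ for all distinct $i,j$ and $R_i\ne\emptyset$ for all $i$. Slices $\mathcal S_i=\{R_i:R\in\mathcal S\}$. A refinement of $\mathcal S$ is a function $H$ with $H(R)\subseteq R$ and $H(R)$ without empty component whenever $R$ has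 none; a multi-refinement has the form $H(R)=(h_1(R_1),\dots,h_m(R_m))$ with each $h_i$ a refinement of $\mathcal S_i$ (i.e. $h_i(r)\subseteq r$ and $h_i(r)\ne\emptyset$ if $r\neq\emptyset$). $\mathcal S$ is $\Rsh$-invariant through $H$ if $\Rsh_i^jr=\Rsh_i^jh_i(r)$ for all distinct $i,j$ and all $r\in\mathcal S_i$. $\mathcal S$ is projection stable through $H$ if $H(R)$ is $\Rsh$-consistent for every $\Rsh$-consistent $R\in\mathcal S$. *)

From HB Require Import structures.
From mathcomp Require Import all_boot all_order.
Unset Printing Implicit Defensive.

(* A finite Boolean algebra is a finite complemented (top/bottom) distributive
   lattice: mathcomp's finCTBDistrLatticeType.  union = Order.join,
   intersection = Order.meet, negation = Order.compl, emptyset = Order.bottom,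
   the top element B = Order.top. *)

Section NA.
Context {disp : Order.disp_t} {A : finCTBDistrLatticeType disp}.

Definition bsub (r r' : A) : Prop := Order.join r r' = r'.

Record nonassoc_axioms (conv : A -> A) (comp : A -> A -> A) (e : A) : Prop := {
  na_convK : forall x, conv (conv x) = x;
  na_convU : forall x y, conv (Order.join x y) = Order.join (conv x) (conv y);
  na_convM : forall x y, conv (comp x y) = comp (conv y) (conv x);
  na_e_l : forall x, comp e x = x;
  na_e_r : forall x, comp x e = x;
  na_compU : forall x y z, comp x (Order.join y z) = Order.join (comp x y) (comp x z);
  na_tri : forall x y z,
    Order.meet (comp x y) (conv z) = Order.bottom <->
    Order.meet (comp y z) (conv x) = Order.bottom
}.
End NA.

Record nalg := NAlg {
  na_disp : Order.disp_t;
  na_car : finCTBDistrLatticeType na_disp;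
  na_conv : na_car -> na_car;
  na_comp : na_car -> na_car -> na_car;
  na_e : na_car;
  na_ax : nonassoc_axioms na_conv na_comp na_e
}.

Definition projection_operator (A A' : nalg) (P : na_car A -> na_car A') : Prop :=
  (forall r r', P (Order.join r r') = Order.join (P r) (P r')) /\
  (forall r, P (na_conv A r) = na_conv A' (P r)).

Definition proj_family_ok (m : nat) (A : 'I_m -> nalg)
    (P : forall i j : 'I_m, na_car (A i) -> na_car (A j)) : Prop :=
  forall i j : 'I_m, i != j -> @projection_operator (A i) (A j) (P i j).

Record multi_algebra (m : nat) := MultiAlg {
  ma_alg : 'I_m -> nalg;
  ma_proj : forall i j : 'I_m, na_car (ma_alg i) -> na_car (ma_alg j);
  ma_proj_ok : proj_family_ok m ma_alg ma_proj
}.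

Section Multi.
Variables (m : nat) (MA : multi_algebra m).

Definition mrel := forall i : 'I_m, na_car (ma_alg m MA i).

Definition proj_consistent (R : mrel) : Prop :=
  (forall i j : 'I_m, i != j -> bsub (R j) (ma_proj m MA i j (R i))) /\
  (forall i : 'I_m, R i <> Order.bottom).

Definition slice (S : mrel -> Prop) (i : 'I_m) (r : na_car (ma_alg m MA i)) : Prop :=
  exists R, S R /\ R i = r.

Definition refinement1 (A : nalg) (X : na_car A -> Prop) (h : na_car A -> na_car A) : Prop :=
  forall r, X r -> bsub (h r) r /\ (r <> Order.bottom -> h r <> Order.bottom).

Definition multi_refinement (S : mrel -> Prop)
    (h : forall i : 'I_m, na_car (ma_alg m MA i) -> na_car (ma_alg m MA i)) : Prop :=
  forall i, refinement1 (ma_alg m MA i) (slice S i) (h i).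

Definition apply_multi (h : forall i : 'I_m, na_car (ma_alg m MA i) -> na_car (ma_alg m MA i))
    (R : mrel) : mrel := fun i => h i (R i).

Definition proj_invariant (S : mrel -> Prop)
    (h : forall i : 'I_m, na_car (ma_alg m MA i) -> na_car (ma_alg m MA i)) : Prop :=
  forall i j : 'I_m, i != j -> forall r, slice S i r ->
    ma_proj m MA i j r = ma_proj m MA i j (h i r).

Definition projection_stable (S : mrel -> Prop) (H : mrel -> mrel) : Prop :=
  forall R, S R -> proj_consistent R -> proj_consistent (H R).
End Multi.

From mathcomp Require Import all_boot all_order.
Import Order.LTheory.

(* Refining R_j only shrinks it, while refining R_i leaves its projections
   unchanged by invariance; so h_j(R_j) <= R_j <= proj_ij R_i = proj_ij h_i(R_i),
   and nonemptiness of each component is preserved by each h_i. *)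

Lemma bsub_trans (d : Order.disp_t) (A : finCTBDistrLatticeType d) (a b c : A) :
  bsub a b -> bsub b c -> bsub a c.
Proof. by rewrite /bsub => ab <-; rewrite joinA ab. Qed.

Section ProjectionStability.
Context {m : nat} {MA : multi_algebra m} {S : mrel m MA -> Prop}.
Context {h : forall i : 'I_m, na_car (ma_alg m MA i) -> na_car (ma_alg m MA i)}.
Hypothesis h_refines : multi_refinement m MA S h.

Lemma slice_component {R : mrel m MA} (i : 'I_m) : S R -> slice m MA S i (R i).
Proof. by move=> SR; exists R. Qed.

Lemma refine_component_sub {R : mrel m MA} (i : 'I_m) :
  S R -> bsub (h i (R i)) (R i).
Proof. by move=> SR; case: (h_refines i _ (slice_component i SR)). Qed.

Lemma refine_component_neq0 {R : mrel m MA} (i : 'I_m) :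
  S R -> R i <> Order.bottom -> h i (R i) <> Order.bottom.
Proof. by move=> SR; case: (h_refines i _ (slice_component i SR)). Qed.

Lemma refine_component_sub_proj {R : mrel m MA} {i j : 'I_m} :
  proj_invariant m MA S h -> S R -> i != j ->
  bsub (R j) (ma_proj m MA i j (R i)) ->
  bsub (h j (R j)) (ma_proj m MA i j (h i (R i))).
Proof.
move=> h_inv SR ij Rji.
rewrite -(h_inv i j ij _ (slice_component i SR)).
exact: bsub_trans (refine_component_sub j SR) Rji.
Qed.

End ProjectionStability.

Theorem proposition6p22 (m : nat) (MA : multi_algebra m) (S : mrel m MA -> Prop)
    (h : forall i : 'I_m, na_car (ma_alg m MA i) -> na_car (ma_alg m MA i)) :
  multi_refinement m MA S h ->
  proj_invariant m MA S h ->
  projection_stable m MA S (apply_multi m MA h).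
Proof.
move=> h_refines h_inv R SR [R_sub R_neq0]; split=> [i j ij | i].
- exact: (refine_component_sub_proj h_refines h_inv SR ij (R_sub i j ij)).
- exact: (refine_component_neq0 h_refines i SR (R_neq0 i)).
Qed.
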